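(* Let $\mathcal{S}$ be the set of real numbers $c$ for which there exists a hereditary property of ordered graphs $\mathcal{P}$ with $\lim_{n \to \infty} |\mathcal{P}_n|^{1/n} = c$. Then for every integer $n \geqslant 2$ we have $n \in A^{n-1}(\mathcal{S})$, i.e. $n$ is a degree $n-1$ accumulation point from below of $\mathcal{S}$.
   Context: A hereditary property of ordered graphs is a collection of ordered graphs (graphs on $[n]$ with the natural order) closed under order-preserving isomorphism and under taking induced ordered subgraphs; $\mathcal{P}_n$ denotes its members with vertex set $[n]$. For $S\subset\mathbb{R}$, a point $c\in\mathbb{R}$ is an accumulation point from below of $S$ if for every $\varepsilon>0$, $S\cap(c-\varepsilon,c)\neq\emptyset$. $A^1(S)$ denotes the set of accumulation points from below of $S$, and $A^{m+1}(S)=A^1(A^m(S))$ for $m\in\mathbb{N}$. *)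

From HB Require Import structures.
From mathcomp Require Import all_boot all_order all_algebra.
From mathcomp Require Import all_classical all_reals all_analysis.
Set Implicit Arguments. Unset Strict Implicit. Unset Printing Implicit Defensive.
Import Order.TTheory GRing.Theory Num.Theory numFieldNormedType.Exports.
Local Open Scope classical_set_scope.
Local Open Scope ring_scope.

(* An ordered graph on [n] = {0,...,n-1} (natural order) is given by its
   adjacency indicator on pairs of vertices, required to be irreflexive and
   symmetric (a simple graph). *)
Definition adj (n : nat) := {ffun 'I_n * 'I_n -> bool}.

Definition is_ograph (n : nat) (G : adj n) : bool :=
  [forall i : 'I_n, ~~ G (i, i)] && [forall i : 'I_n, forall j : 'I_n, G (i, j) == G (j, i)].

(* The ordered graph induced by G on the image of a strictly increasing map
   f : [m] -> [n], relabelled order-preservingly by [m]. *)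
Definition induced (m n : nat) (f : 'I_m -> 'I_n) (G : adj n) : adj m :=
  [ffun p : 'I_m * 'I_m => G (f p.1, f p.2)].

Definition strict_incr (m n : nat) (f : 'I_m -> 'I_n) : Prop :=
  forall i j : 'I_m, (i < j)%N -> (f i < f j)%N.

(* Closure under order-preserving isomorphism is automatic in this
   representation (the only order-preserving bijection of [n] is the identity). *)
Definition ograph_property := forall n : nat, pred (adj n).

Definition hereditary (P : ograph_property) : Prop :=
  forall (m n : nat) (f : 'I_m -> 'I_n) (G : adj n),
    is_ograph G -> P n G -> strict_incr f -> P m (induced f G).

Definition Pcard (P : ograph_property) (n : nat) : nat :=
  #|[set G : adj n | is_ograph G && P n G]|.

Definition growth_constants (R : realType) : set R :=
  [set c : R | exists P : ograph_property, hereditary P /\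
     (fun n : nat => ((Pcard P n)%:R : R) `^ (n%:R^-1)) @ \oo --> c].

Definition acc_below (R : realType) (S : set R) : set R :=
  [set c | forall e : R, 0 < e -> exists x, S x /\ c - e < x /\ x < c].

Definition acc_below_iter (R : realType) (m : nat) (S : set R) : set R :=
  iter m (@acc_below R) S.

(* Colour the vertices of [n] with k colours and cut them into consecutive
   monochromatic blocks, a block of colour a having length at most cap a (no
   bound when cap a = 0); join two vertices when they have the same colour and
   are not consecutive inside one block. These graphs form a hereditary
   property whose counts c_n satisfy, up to k anchor vertices of distinct
   colours, the renewal equation c_n = sum over blocks (a, t) of c_(n-t).
   Hence its growth constant is 1/y, for y in (0,1) the root of
   [blocks_gf y = 1], where [blocks_gf y] is the sum over colours a of
   y + y^2 + ... + y^(cap a) (the full geometric series when cap a = 0).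
   Without caps [blocks_gf y = k y / (1 - y)] and the growth constant is k + 1. Capping an
   uncapped colour at a large length m raises the root by an amount that
   vanishes as m grows, so a growth constant obtained with j uncapped colours
   is a limit from below of growth constants with j - 1 uncapped colours, and
   induction on the number of uncapped colours gives k + 1 in A^k(S). *)

From Pilot Require Import Defs.
From HB Require Import structures.
From mathcomp Require Import all_boot all_order all_algebra.
From mathcomp Require Import all_classical all_reals all_analysis.
From mathcomp Require Import zify ring lra.
Set Implicit Arguments. Unset Strict Implicit. Unset Printing Implicit Defensive.
Import Order.TTheory GRing.Theory Num.Theory numFieldNormedType.Exports.

Section Codes.
Variables (k : nat) (cap : nat -> nat).

(* A code colours vertex [i] by [label c i] < k and says by [linked c i]
   whether vertex [i.+1] belongs to the same block; [cap a = 0] means that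
   blocks of colour [a] may be arbitrarily long. *)
Definition label (c : seq (nat * bool)) i := (nth (0, false) c i).1.
Definition linked (c : seq (nat * bool)) i := (nth (0, false) c i).2.

Definition within_cap a t := (cap a == 0) || (t <= cap a).

Definition valid_code (c : seq (nat * bool)) : Prop :=
  [/\ forall i, i < size c -> label c i < k,
      forall i, linked c i -> i.+1 < size c /\ label c i = label c i.+1 &
      forall i r, (forall s, s < r -> linked c (i + s)) ->
        within_cap (label c i) r.+1].

Definition max_block a n := if cap a == 0 then n else minn n (cap a).

Definition blocks n := [seq (a, t) | a <- iota 0 k, t <- iota 1 (max_block a n)].

Definition block (a t : nat) : seq (nat * bool) :=
  nseq t.-1 (a, true) ++ [:: (a, false)].

Fixpoint codes_fuel fuel n : seq (seq (nat * bool)) :=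
  match fuel, n with
  | _, 0 => [:: [::]]
  | 0, _.+1 => [::]
  | fuel'.+1, _ =>
      [seq block p.1 p.2 ++ c | p <- blocks n, c <- codes_fuel fuel' (n - p.2)]
  end.

(* Blocks have positive length, so fuel [n] suffices. *)
Definition codes n := codes_fuel n n.

Definition ncodes n := size (codes n).

Lemma size_block a t : 0 < t -> size (block a t) = t.
Proof. by case: t => // t _; rewrite size_cat size_nseq addn1. Qed.

Lemma nth_block_cat a t c i : 0 < t ->
  nth (0, false) (block a t ++ c) i =
  if i < t then (a, i.+1 < t) else nth (0, false) c (i - t).
Proof.
move=> t_gt0; rewrite nth_cat size_block //; case: ifP => // it.
rewrite nth_cat size_nseq; case: t t_gt0 it => // t _ it /=.
rewrite nth_nseq; case: ifP => [it'|]; first by rewrite ltnS it'.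
move=> /negbT; rewrite -leqNgt => ti.
have -> : i = t by lia.
by rewrite subnn ltnn.
Qed.

Lemma mem_blocks n a t :
  ((a, t) \in blocks n) = (a < k) && (0 < t <= max_block a n).
Proof.
apply/allpairsPdep/andP => [[x [y [xin yin [-> ->]]]]|[ak tin]].
  by move: xin yin; rewrite !mem_iota /= add0n add1n ltnS => -> ->.
by exists a, t; split => //; rewrite mem_iota //= add1n ltnS.
Qed.

Lemma max_block_le a n : max_block a n <= n.
Proof. by rewrite /max_block; case: ifP => // _; exact: geq_minl. Qed.

Lemma blocksP n p : p \in blocks n -> [/\ p.1 < k, 0 < p.2 & p.2 <= n].
Proof.
case: p => a t; rewrite mem_blocks => /and3P[ak t_gt0 tn].
by split => //; apply: leq_trans tn (max_block_le a n).
Qed.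

Lemma valid_code_nil : valid_code [::].
Proof.
split=> [//|i|i [|r] H]; first by rewrite /linked nth_nil.
  by rewrite /within_cap; case: (cap _).
by have := H 0 isT; rewrite /linked nth_nil.
Qed.

Lemma valid_code_block_cat a t c n :
  (a, t) \in blocks n -> valid_code c -> valid_code (block a t ++ c).
Proof.
rewrite mem_blocks => /and3P[ak t_gt0 tc] [c1 c2 c3].
have E := nth_block_cat a c _ t_gt0.
split.
- move=> i; rewrite size_cat size_block // /label E; case: ifP => // /negbT.
  by rewrite -leqNgt => ti ilt; apply: c1; lia.
- move=> i; rewrite /linked /label !E size_cat size_block //.
  case: ifP => it /=; first by move=> ti; rewrite ti /=; split => //; lia.
  move=> /(c2 (i - t)) [H1 H2]; have -> : (i.+1 < t) = false by lia.
  split; first lia.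
  by move: H2; rewrite /label; have -> : i.+1 - t = (i - t).+1 by lia.
- move=> i r H; rewrite /label E; case: ifP => it /=.
    have ir : i + r < t.
      rewrite ltnNge; apply/negP => tr.
      have := H (t.-1 - i); rewrite /linked E.
      have -> : i + (t.-1 - i) = t.-1 by lia.
      have -> : t.-1 < t by lia.
      by rewrite /= prednK // ltnn => /(_ ltac:(lia)).
    by move: tc; rewrite /within_cap /max_block; case: eqP => //= _ tc; lia.
  apply: c3 => s sr; have := H s sr; rewrite /linked E.
  have -> : (i + s < t) = false by lia.
  by have -> : i + s - t = i - t + s by lia.
Qed.

Lemma valid_code_drop c t : valid_code c -> valid_code (drop t c).
Proof.
move=> [c1 c2 c3]; split.
- by move=> i; rewrite size_drop /label nth_drop => ?; apply: c1; lia.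
- move=> i; rewrite /linked /label !nth_drop size_drop => /c2 [H1 H2].
  by split; [lia | move: H2; rewrite /label addnS].
- move=> i r H; rewrite /label nth_drop; apply: c3 => s sr.
  by have := H s sr; rewrite /linked nth_drop addnA.
Qed.

(* The first block ends at the first unlinked vertex. *)
Lemma valid_code_block_decomp c n : valid_code c -> size c = n -> 0 < n ->
  exists a t c', [/\ (a, t) \in blocks n, c = block a t ++ c',
                     valid_code c' & size c' = n - t].
Proof.
move=> cv; have [c1 c2 c3] := cv; move=> sc n_gt0.
pose unlinked := fun x : nat * bool => ~~ x.2.
have has_unlinked : has unlinked c.
  apply/hasP; exists (nth (0, false) c n.-1); first by rewrite mem_nth // sc; lia.
  by apply/negP => /c2 []; rewrite sc; lia.
have := has_find unlinked c; rewrite has_unlinked.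
set f := find unlinked c => fc; set t := f.+1; set a := label c 0.
have linked_before s : s < f -> linked c s.
  by move=> /(before_find (0, false)) /negbFE.
have unlinked_f : linked c f = false.
  by have := nth_find (0, false) has_unlinked => /negbTE.
have label_block s : s < t -> label c s = a.
  elim: s => // s IH st; rewrite -IH; last lia.
  by have [_ ->] := c2 s (linked_before s st).
have cap_a : within_cap a t.
  by apply: (c3 0 f) => s sf; exact: linked_before.
exists a, t, (drop t c); split.
- rewrite mem_blocks; apply/and3P; split => //; first by apply: c1; lia.
  move: cap_a; rewrite /within_cap /max_block; case: eqP => //= _ ta; lia.
- rewrite -[LHS](cat_take_drop t); congr (_ ++ _).
  have tn : t <= n by rewrite -sc.
  apply: (@eq_from_nth _ (0, false)).
    by rewrite size_take size_block // sc; case: ifP; lia.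
  move=> i; rewrite size_take sc => it; have it' : i < t by move: it; case: ifP; lia.
  rewrite nth_take // -[block a t]cats0 nth_block_cat // it'.
  rewrite [nth _ _ _]surjective_pairing -/(label c i) -/(linked c i) label_block //.
  rewrite /t ltnS; case: (ltnP i f) => [/linked_before -> // | fi].
  have -> : i = f by lia.
  by rewrite unlinked_f.
- exact: valid_code_drop.
- by rewrite size_drop sc.
Qed.

Lemma mem_codes_fuel fuel n c : n <= fuel ->
  (c \in codes_fuel fuel n) <-> valid_code c /\ size c = n.
Proof.
elim: fuel n c => [|fuel IH] [|n] c nf //=;
  try by rewrite inE; split => [/eqP -> | [_ /size0nil ->]] //; split => //;
         exact: valid_code_nil.
split.
  move=> /allpairsPdep [[a t] [c' [pin cin ->]]].
  have [_ /= t_gt0 tn] := blocksP pin.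
  have [cv sc] := (IH (n.+1 - t) c' ltac:(lia)).1 cin.
  split; first exact: (valid_code_block_cat pin cv).
  by rewrite size_cat size_block // sc /=; lia.
move=> [cv sc]; have [a [t [c' [pin -> cv' sc']]]] := valid_code_block_decomp cv sc isT.
apply/allpairsPdep; exists (a, t), c'; split => //.
have [_ /= t_gt0 _] := blocksP pin.
by apply/(IH (n.+1 - t)); [lia | split].
Qed.

Lemma mem_codes n c : (c \in codes n) <-> valid_code c /\ size c = n.
Proof. exact: mem_codes_fuel. Qed.

Lemma block_cat_inj a t c a' t' c' : 0 < t -> 0 < t' ->
  block a t ++ c = block a' t' ++ c' -> [/\ a = a', t = t' & c = c'].
Proof.
move=> t_gt0 t'_gt0 E.
have find_unlinked a1 t1 c1 : find (fun x : nat * bool => ~~ x.2) (block a1 t1 ++ c1) = t1.-1.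
  rewrite /block -catA find_cat size_nseq /= addn0.
  by have -> : has (fun x : nat * bool => ~~ x.2) (nseq t1.-1 (a1, true)) = false
    by apply/hasP => [[x /nseqP [-> _]]].
have tt' : t = t' by have := find_unlinked a t c; rewrite E find_unlinked; lia.
subst t'.
have aa' : a = a'.
  by have := congr1 (fun s => (nth (0, false) s 0).1) E; rewrite /= !nth_block_cat // t_gt0.
subst a'; split => //.
by have := congr1 (drop t) E; rewrite !drop_size_cat // size_block.
Qed.

Lemma uniq_allpairs_dep_inj (S T U : eqType) (f : S -> T -> U) (s : seq S)
    (t : S -> seq T) :
  uniq s -> (forall x, uniq (t x)) ->
  {in s &, forall x x' y y', f x y = f x' y' -> x = x' /\ y = y'} ->
  uniq [seq f x y | x <- s, y <- t x].
Proof.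
move=> us ut inj; apply: (@allpairs_uniq_dep S (fun _ => T)) => //.
move=> [x y] [x' y'] /allpairsPdep [x1 [y1 [x1s _ [-> _]]]].
by move=> /allpairsPdep [x2 [y2 [x2s _ [-> _]]]] /= /inj [] // -> ->.
Qed.

Lemma uniq_blocks n : uniq (blocks n).
Proof.
by apply: uniq_allpairs_dep_inj => [|x|x x' _ _ y y' [-> ->]] //; exact: iota_uniq.
Qed.

Lemma uniq_codes_fuel fuel n : uniq (codes_fuel fuel n).
Proof.
elim: fuel n => [|fuel IH] [|n] //=.
apply: uniq_allpairs_dep_inj => //; first exact: uniq_blocks.
move=> [a t] [a' t'] /blocksP[_ /= t_gt0 _] /blocksP[_ /= t'_gt0 _] y y'.
by move=> /block_cat_inj => /(_ t_gt0 t'_gt0) [-> -> ->].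
Qed.

Lemma ncodes0 : ncodes 0 = 1.
Proof. by []. Qed.

Lemma ncodes_rec n : 0 < n -> ncodes n = \sum_(p <- blocks n) ncodes (n - p.2).
Proof.
case: n => // n _; rewrite /ncodes /codes /= size_allpairs_dep sumnE big_map.
apply: eq_big_seq => -[a t] /blocksP[_ /= t_gt0 tn] /=.
apply/perm_size/uniq_perm; try exact: uniq_codes_fuel.
move=> c; have E1 := @mem_codes_fuel n (n.+1 - t) c ltac:(lia).
have E2 := @mem_codes_fuel (n.+1 - t) (n.+1 - t) c (leqnn _).
by apply/idP/idP => [/E1/E2 | /E2/E1].
Qed.

Lemma ncodes_gt0 n : 0 < k -> 0 < ncodes n.
Proof.
move=> k_gt0; elim/ltn_ind: n => [[|n]] IH //.
have pin : (0, 1) \in blocks n.+1.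
  rewrite mem_blocks k_gt0 /max_block; case: eqP => //= /eqP c0.
  by rewrite leq_min /= lt0n.
rewrite ncodes_rec // (bigD1_seq _ pin (uniq_blocks n.+1)) /=.
by apply: leq_trans (leq_addr _ _); apply: IH; rewrite subn1.
Qed.

End Codes.

Definition code_adj (c : seq (nat * bool)) i j :=
  [&& i != j, label c i == label c j, ~~ ((j == i.+1) && linked c i)
    & ~~ ((i == j.+1) && linked c j)].

Definition code_graph n c : adj n := [ffun p : 'I_n * 'I_n => code_adj c p.1 p.2].

Definition block_property k cap : ograph_property :=
  fun n => [pred G : adj n | has (fun c => code_graph n c == G) (codes k cap n)].

Lemma code_graph_ograph n c : is_ograph (code_graph n c).
Proof.
apply/andP; split; apply/forallP => i; first by rewrite ffunE /code_adj eqxx.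
apply/forallP => j; rewrite !ffunE /code_adj /=; apply/eqP.
rewrite [j == i :> nat]eq_sym [label c j == _]eq_sym.
by case: (i == j :> nat); case: (label c i == label c j); rewrite //= andbC.
Qed.

Lemma incr_eq_succ (F : nat -> nat) i j : {homo F : x y / x < y} ->
  (F j == (F i).+1) = (j == i.+1) && (F i.+1 == (F i).+1).
Proof.
move=> F_incr; case: (eqVneq j i.+1) => [-> //|j_neq] /=.
apply/negP => /eqP E; case: (ltngtP j i) => ji.
- by have := F_incr _ _ ji; lia.
- case: (ltngtP j i.+1) => ji'; try lia.
  by have := F_incr _ _ ji'; have := F_incr _ _ (ltnSn i); lia.
- by subst j; lia.
Qed.

(* The code induced on the vertices [F 0 < F 1 < ... < F m.-1]: a link
   survives only between vertices that stay consecutive. *)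
Definition restrict_code (F : nat -> nat) m (c : seq (nat * bool)) :=
  mkseq (fun i => (label c (F i), linked c (F i) && (F i.+1 == (F i).+1))) m.

Section Restrict.
Variables (k : nat) (cap : nat -> nat) (F : nat -> nat) (m : nat).
Variable c : seq (nat * bool).
Hypotheses (F_incr : {homo F : x y / x < y}) (F_dom : forall i, (i < m) = (F i < size c)).

Let label_restrict i : i < m -> label (restrict_code F m c) i = label c (F i).
Proof. by move=> im; rewrite /label nth_mkseq. Qed.

Let linked_restrict i : linked (restrict_code F m c) i =
  [&& i < m, linked c (F i) & F i.+1 == (F i).+1].
Proof.
rewrite /linked; case: (ltnP i m) => im; first by rewrite nth_mkseq.
by rewrite nth_default // size_mkseq.
Qed.

Lemma valid_restrict_code : valid_code k cap c ->
  valid_code k cap (restrict_code F m c).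
Proof.
move=> [c1 c2 c3]; split.
- by move=> i; rewrite size_mkseq => im; rewrite label_restrict // c1 // -F_dom.
- move=> i; rewrite linked_restrict => /and3P[im /c2[F_lt E] /eqP F_succ].
  have im1 : i.+1 < m by rewrite F_dom F_succ.
  by rewrite size_mkseq !label_restrict // F_succ.
- move=> i [|r] H; first by rewrite /within_cap; case: (cap _).
  have im : i < m by have := H 0 isT; rewrite linked_restrict addn0 => /andP[].
  have F_run s : s <= r.+1 -> F (i + s) = F i + s.
    elim: s => [|s IH] sr; first by rewrite !addn0.
    have := H s ltac:(lia); rewrite linked_restrict => /and3P[_ _ /eqP E].
    by rewrite addnS E IH; lia.
  rewrite label_restrict //; apply: c3 => s sr.
  by have := H s sr; rewrite linked_restrict F_run; [case/and3P | lia].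
Qed.

Lemma code_graph_restrict (f : 'I_m -> 'I_(size c)) :
  (forall o : 'I_m, F o = f o) ->
  code_graph m (restrict_code F m c) = Defs.induced f (code_graph (size c) c).
Proof.
move=> Ff; apply/ffunP => -[i j]; rewrite !ffunE /code_adj /= !label_restrict //.
rewrite !linked_restrict !ltn_ord /= -!Ff.
rewrite (inj_eq (incn_inj (leq_mono F_incr))).
rewrite (incr_eq_succ i j F_incr) (incr_eq_succ j i F_incr).
by case: (j == i.+1 :> nat); case: (i == j.+1 :> nat); case: (linked c (F i));
   case: (linked c (F j)); case: (F i.+1 == (F i).+1); case: (F j.+1 == (F j).+1).
Qed.

End Restrict.

Lemma block_property_hereditary k cap : hereditary (block_property k cap).
Proof.
move=> m n f G _ /hasP [c /mem_codes[cv sc] /eqP <-] f_incr; subst n.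
pose F i := if insub i is Some o then val (f o) else size c + i.
have F_ord (o : 'I_m) : F o = f o by rewrite /F valK.
have F_big i : m <= i -> F i = size c + i.
  by move=> mi; rewrite /F insubF // ltnNge mi.
clearbody F.
have F_dom i : (i < m) = (F i < size c).
  case: (ltnP i m) => im; first by rewrite -[i]/(val (Ordinal im)) F_ord ltn_ord.
  by rewrite F_big // ltnNge leq_addr.
have F_incr : {homo F : x y / x < y}.
  move=> x y xy; case: (ltnP y m) => ym.
    have xm : x < m by lia.
    by rewrite -[x]/(val (Ordinal xm)) -[y]/(val (Ordinal ym)) !F_ord f_incr.
  case: (ltnP x m) => xm; first by rewrite F_dom in xm; rewrite (F_big y) //; lia.
  by rewrite !F_big //; lia.
apply/hasP; exists (restrict_code F m c); last by rewrite (code_graph_restrict F_incr F_ord).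
by apply/mem_codes; rewrite size_mkseq; split => //; exact: valid_restrict_code.
Qed.

Lemma Pcard_le_ncodes k cap n : Pcard (block_property k cap) n <= ncodes k cap n.
Proof.
apply: (@leq_trans #|[pred G in map (code_graph n) (codes k cap n)]|).
  apply/subset_leq_card/fintype.subsetP => G /set_mem /andP[_ /hasP[c cin /eqP <-]].
  by rewrite inE map_f.
by rewrite /ncodes -(size_map (code_graph n)) card_size.
Qed.

(* [k] leading vertices of distinct colours make every colour, hence the
   whole code, readable from the graph. *)
Definition anchor k : seq (nat * bool) := [seq (a, false) | a <- iota 0 k].

Section Anchor.
Variables (k : nat) (cap : nat -> nat).

Lemma nth_anchor c i : nth (0, false) (anchor k ++ c) i =
  if i < k then (i, false) else nth (0, false) c (i - k).
Proof.
rewrite nth_cat size_map size_iota; case: ifP => // ik.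
by rewrite (nth_map 0) ?size_iota // nth_iota.
Qed.

Lemma label_anchor c i : label (anchor k ++ c) i = if i < k then i else label c (i - k).
Proof. by rewrite /label nth_anchor; case: ifP. Qed.

Lemma linked_anchor c i : linked (anchor k ++ c) i = (k <= i) && linked c (i - k).
Proof. by rewrite /linked nth_anchor (leqNgt k i); case: ifP. Qed.

Lemma valid_code_anchor c : valid_code k cap c -> valid_code k cap (anchor k ++ c).
Proof.
move=> [c1 c2 c3]; split.
- move=> i; rewrite size_cat size_map size_iota label_anchor.
  by case: ifP => // ik ilt; apply: c1; lia.
- move=> i; rewrite linked_anchor size_cat size_map size_iota !label_anchor.
  move=> /andP[ki /c2[H1 H2]]; have -> : (i.+1 < k) = false by lia.
  by rewrite (ltnNge i k) ki subSn //; split; first lia.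
- move=> i [|r] H; first by rewrite /within_cap; case: (cap _).
  have ki : k <= i by have := H 0 isT; rewrite linked_anchor addn0 => /andP[].
  rewrite label_anchor ltnNge ki /=; apply: c3 => s sr.
  have -> : i - k + s = i + s - k by lia.
  by have := H s sr; rewrite linked_anchor => /andP[].
Qed.

Lemma code_adj_anchor_label c a i : a < k ->
  code_adj (anchor k ++ c) a (k + i) = (a == label c i).
Proof.
move=> ak; rewrite /code_adj !label_anchor !linked_anchor ak.
rewrite (ltnNge (k + i) k) leq_addr addKn (leqNgt k a) ak /=.
have -> : (a == k + i) = false by lia.
have -> : (a == (k + i).+1) = false by lia.
by rewrite andbF /= andbT.
Qed.

Lemma code_adj_anchor_next c i :
  code_adj (anchor k ++ c) (k + i) (k + i.+1) =
  (label c i == label c i.+1) && ~~ linked c i.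
Proof.
rewrite /code_adj !label_anchor !linked_anchor !leq_addr !addKn /=.
have -> : (k + i < k) = false by lia.
have -> : (k + i.+1 < k) = false by lia.
have -> : (k + i.+1 == (k + i).+1) = true by lia.
have -> : (k + i == k + i.+1) = false by lia.
have -> : (k + i == (k + i.+1).+1) = false by lia.
by rewrite /= andbT.
Qed.

Lemma code_graph_anchor_inj N c1 c2 : valid_code k cap c1 -> valid_code k cap c2 ->
  size c1 = N -> size c2 = N ->
  code_graph (k + N) (anchor k ++ c1) = code_graph (k + N) (anchor k ++ c2) -> c1 = c2.
Proof.
move=> [v11 v12 _] [v21 v22 _] s1 s2 E.
have adjE i j : i < k + N -> j < k + N ->
    code_adj (anchor k ++ c1) i j = code_adj (anchor k ++ c2) i j.
  by move=> hi hj; have := congr1 (fun G : adj (k + N) => G (Ordinal hi, Ordinal hj)) E; rewrite !ffunE.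
have labelE i : i < N -> label c1 i = label c2 i.
  move=> iN; have lk : label c1 i < k by apply: v11; lia.
  have := adjE (label c1 i) (k + i) ltac:(lia) ltac:(lia).
  by rewrite !code_adj_anchor_label // eqxx => /esym/eqP.
have linkedE i : linked c1 i = linked c2 i.
  case: (ltnP i.+1 N) => iN; last first.
    rewrite (negbTE (_ : ~~ linked c1 i)); last by apply/negP => /v12[]; lia.
    by rewrite (negbTE (_ : ~~ linked c2 i)) //; apply/negP => /v22[]; lia.
  have iN' : i < N by lia.
  have := adjE (k + i) (k + i.+1) ltac:(lia) ltac:(lia).
  rewrite !code_adj_anchor_next !labelE //; case: eqP => [_ /= /negb_inj //|L _].
  rewrite (negbTE (_ : ~~ linked c1 i)); last by apply/negP => /v12[_]; rewrite !labelE.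
  by rewrite (negbTE (_ : ~~ linked c2 i)) //; apply/negP => /v22[].
apply: (@eq_from_nth _ (0, false)) => [|i]; first by rewrite s1 s2.
rewrite s1 => iN; rewrite [nth _ c1 i]surjective_pairing [nth _ c2 i]surjective_pairing.
by rewrite -/(label c1 i) -/(label c2 i) -/(linked c1 i) -/(linked c2 i) labelE ?linkedE.
Qed.

End Anchor.

Lemma ncodes_le_Pcard k cap N : ncodes k cap N <= Pcard (block_property k cap) (k + N).
Proof.
rewrite /Pcard cardE /ncodes -(size_map (fun c => code_graph (k + N) (anchor k ++ c))).
apply: uniq_leq_size.
  rewrite map_inj_in_uniq; first exact: uniq_codes_fuel.
  move=> c1 c2 /mem_codes[v1 s1] /mem_codes[v2 s2].
  exact: code_graph_anchor_inj v1 v2 s1 s2.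
move=> G /mapP[c /mem_codes[v s] ->].
rewrite mem_enum inE; apply/andP; split; first exact: code_graph_ograph.
apply/hasP; exists (anchor k ++ c) => //; apply/mem_codes.
by rewrite size_cat size_map size_iota s; split => //; exact: valid_code_anchor.
Qed.

Local Open Scope classical_set_scope.
Local Open Scope ring_scope.

Section GeneratingFunctions.
Variable R : realType.
Implicit Types (y z : R) (k : nat) (cap : nat -> nat).

Definition geo (c : nat) y := \sum_(t <- iota 1 c) y ^+ t.

Definition colour_gf cap a y := if cap a == 0%N then y / (1 - y) else geo (cap a) y.

Definition blocks_gf k cap y := \sum_(a <- iota 0 k) colour_gf cap a y.

Definition trunc_gf k cap N y := \sum_(p <- blocks k cap N) y ^+ p.2.

Lemma sum_iota_const k (b : R) : \sum_(a <- iota 0 k) b = k%:R * b.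
Proof. by rewrite big_const_seq count_predT size_iota iter_addr_0 mulr_natl. Qed.

Lemma geo_closed c y : (1 - y) * geo c y = y - y ^+ c.+1.
Proof.
elim: c => [|c IH]; first by rewrite /geo big_nil mulr0 expr1 subrr.
rewrite /geo; have -> : iota 1 c.+1 = iota 1 c ++ [:: c.+1].
  by rewrite -[c.+1]addn1 iotaD /= add1n addn1.
rewrite big_cat /= big_cons big_nil addr0 mulrDr.
by rewrite -/(geo c y) IH !exprS; ring.
Qed.

Lemma geoE c y : y != 1 -> geo c y = (y - y ^+ c.+1) / (1 - y).
Proof. by move=> y1; rewrite -geo_closed [(1 - y) * _]mulrC mulfK // subr_eq0 eq_sym. Qed.

Lemma geo_le_series c y : 0 <= y < 1 -> geo c y <= y / (1 - y).
Proof.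
move=> /andP[y0 y1]; rewrite geoE ?lt_eqF // ler_pM2r ?invr_gt0 ?subr_gt0 //.
by rewrite lerBlDr lerDl exprn_ge0.
Qed.

Lemma geo_le c c' y : (c <= c')%N -> 0 <= y -> geo c y <= geo c' y.
Proof.
move=> cc y0; rewrite /geo -(subnKC cc) iotaD big_cat /= lerDl.
by apply: sumr_ge0 => t _; apply: exprn_ge0.
Qed.

Lemma series_lt y z : 0 <= y -> y < z -> z < 1 -> y / (1 - y) < z / (1 - z).
Proof.
move=> y0 yz z1; have y1 : y < 1 by apply: lt_trans z1.
have E (x : R) : x < 1 -> x / (1 - x) = (1 - x)^-1 - 1.
  move=> x1; have : 1 - x != 0 by rewrite subr_eq0 eq_sym lt_eqF.
  by move=> ?; field.
by rewrite !E // ltrD2r ltf_pV2 ?posrE ?subr_gt0 // ltrD2l ltrN2.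
Qed.

Lemma colour_gf_lt cap a y z : 0 <= y -> y < z -> z < 1 ->
  colour_gf cap a y < colour_gf cap a z.
Proof.
move=> y0 yz z1; rewrite /colour_gf; case: eqP => ca; first exact: series_lt.
have z0 : 0 <= z by apply: le_trans (ltW yz).
case: (cap a) ca => // c _; rewrite /geo /= !big_cons expr1.
apply: ltr_leD => //; apply: ler_sum => t _.
by apply: lerXn2r; rewrite ?nnegrE // ltW.
Qed.

Lemma blocks_gf_lt k cap y z : (0 < k)%N -> 0 <= y -> y < z -> z < 1 ->
  blocks_gf k cap y < blocks_gf k cap z.
Proof.
move=> k_gt0 y0 yz z1; rewrite /blocks_gf; case: k k_gt0 => // k _.
rewrite /= !big_cons; apply: ltr_leD; first exact: colour_gf_lt.
by apply: ler_sum => a _; apply/ltW/colour_gf_lt.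
Qed.

Lemma continuous_sum_at (s : seq nat) (F : nat -> R -> R) x :
  (forall a, {for x, continuous (F a)}) ->
  {for x, continuous (fun y => \sum_(a <- s) F a y)}.
Proof.
move=> F_cont; elim: s => [|a s IH].
  rewrite (_ : (fun _ => _) = cst 0); first exact: cst_continuous.
  by apply: funext => y; rewrite big_nil.
rewrite (_ : (fun _ => _) = F a + (fun y => \sum_(b <- s) F b y)); first exact: continuousD.
by apply: funext => y; rewrite big_cons.
Qed.

Lemma colour_gf_continuous cap a x : x != 1 -> {for x, continuous (colour_gf cap a)}.
Proof.
move=> x1; rewrite /colour_gf; case: eqP => _; last first.
  by apply: continuous_sum_at => t; exact: exprn_continuous.
apply: (@continuousM R R id (fun y => (1 - y)^-1)); first exact: cvg_id.
apply: continuousV; first by rewrite subr_eq0 eq_sym.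
rewrite (_ : (fun y => 1 - y) = cst 1 - id) //.
by apply: continuousB; [exact: cst_continuous | exact: cvg_id].
Qed.

Lemma blocks_gf_continuous k cap x : x != 1 -> {for x, continuous (blocks_gf k cap)}.
Proof.
by move=> x1; apply: continuous_sum_at => a; exact: colour_gf_continuous.
Qed.

Lemma trunc_gfE k cap N y :
  trunc_gf k cap N y = \sum_(a <- iota 0 k) geo (max_block cap a N) y.
Proof. by rewrite /trunc_gf /blocks big_allpairs_dep. Qed.

Lemma trunc_gf_le k cap N y : 0 <= y < 1 -> trunc_gf k cap N y <= blocks_gf k cap y.
Proof.
move=> /andP[y0 y1]; rewrite trunc_gfE; apply: ler_sum => a _.
rewrite /colour_gf /max_block; case: eqP => _; first by apply: geo_le_series; rewrite y0.
by apply: geo_le => //; exact: geq_minr.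
Qed.

(* Once [N] exceeds every finite cap, only the uncapped colours lose their
   geometric tails [y^(N+1) + y^(N+2) + ...]. *)
Lemma trunc_gf_ge k cap N y : 0 <= y < 1 ->
  (forall a, (a < k)%N -> (cap a <= N)%N) ->
  blocks_gf k cap y - k%:R * (y ^+ N.+1 / (1 - y)) <= trunc_gf k cap N y.
Proof.
move=> /andP[y0 y1] capN.
rewrite trunc_gfE /blocks_gf -sum_iota_const -sumrB big_seq [leRHS]big_seq.
apply: ler_sum => a; rewrite mem_iota add0n => /andP[_ ak].
rewrite /colour_gf /max_block; case: eqP => ca.
  by rewrite geoE ?lt_eqF // mulrBl.
have -> : minn N (cap a) = cap a by apply/minn_idPr; exact: capN.
by rewrite lerBlDr lerDl divr_ge0 ?exprn_ge0 // subr_ge0 ltW.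
Qed.

(* Renewal equation: split off the first block. *)
Lemma ncodes_pow_le k cap y : 0 < y -> (forall N, trunc_gf k cap N y <= 1) ->
  forall N, (ncodes k cap N)%:R * y ^+ N <= 1.
Proof.
move=> y0 gf_le1; elim/ltn_ind => -[_|N IH]; first by rewrite ncodes0 mul1r expr0.
rewrite ncodes_rec // natr_sum mulr_suml; apply: le_trans (gf_le1 N.+1).
rewrite big_seq [leRHS]big_seq; apply: ler_sum => -[a t] /blocksP[_ /= t_gt0 tN].
rewrite -[in y ^+ N.+1](subnK tN) exprD mulrA -[leRHS]mul1r ler_pM2r ?exprn_gt0 //.
by apply: IH; lia.
Qed.

Lemma ncodes_pow_ge k cap y M : (0 < k)%N -> 0 < y <= 1 ->
  (forall N, (M <= N)%N -> 1 <= trunc_gf k cap N y) ->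
  forall N, y ^+ M <= (ncodes k cap N)%:R * y ^+ N.
Proof.
move=> k_gt0 /andP[y0 y1] gf_ge1; elim/ltn_ind => N IH.
have ncodes_ge1 : 1 <= (ncodes k cap N)%:R :> R by rewrite ler1n ncodes_gt0.
case: (ltnP N M) => NM.
  apply: le_trans (ler_wiXn2l (ltW y0) y1 (ltnW NM)) _.
  exact: ler_peMl (exprn_ge0 _ (ltW y0)) ncodes_ge1.
case: N IH NM ncodes_ge1 => [|N] IH NM _.
  by rewrite ncodes0 mul1r expr0 exprn_ile1 // ltW.
rewrite ncodes_rec // natr_sum mulr_suml.
apply: le_trans (_ : y ^+ M * trunc_gf k cap N.+1 y <= _).
  by rewrite -[leLHS]mulr1 ler_pM2l ?exprn_gt0 // gf_ge1.
rewrite mulr_sumr big_seq [leRHS]big_seq; apply: ler_sum => -[a t] /blocksP[_ /= t_gt0 tN].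
rewrite -[in y ^+ N.+1](subnK tN) exprD mulrA ler_pM2r ?exprn_gt0 //.
by apply: IH; lia.
Qed.

End GeneratingFunctions.

Section Growth.
Variable R : realType.

Lemma exprn_le_eventually (z d : R) : 0 <= z < 1 -> 0 < d ->
  \forall N \near \oo, z ^+ N <= d.
Proof.
move=> /andP[z0 z1] d0; have := @cvg_expr R z; rewrite ger0_norm // => /(_ z1).
move=> /cvgrPdist_le /(_ d d0); apply: filterS => N.
by rewrite sub0r normrN ger0_norm // exprn_ge0.
Qed.

Lemma powR_ge1Dln (C r : R) : 0 < C -> 1 + r * ln C <= C `^ r.
Proof. by move=> C0; rewrite /powR gt_eqF //; exact: expR_ge1Dx. Qed.

Lemma exprn_powRV (x : R) N : 0 <= x -> (0 < N)%N -> (x ^+ N) `^ N%:R^-1 = x.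
Proof.
move=> x0 N0; rewrite -powR_mulrn // -powRrM mulfV ?powRr1 //.
by rewrite pnatr_eq0 -lt0n.
Qed.

(* [(C * w ^+ N) ^ (1/N) = exp (ln C / N) * w >= (1 + ln C / N) * w]. *)
Lemma root_cvg (u : nat -> R) (l L : R) : 0 <= l -> l < L ->
  (\forall N \near \oo, u N `^ N%:R^-1 <= L) ->
  (forall w, l < w -> w < L -> exists2 C, 0 < C & \forall N \near \oo, C * w ^+ N <= u N) ->
  (fun N => u N `^ N%:R^-1) @ \oo --> L.
Proof.
move=> l0 lL up low; apply/cvgrPdist_le => e e0.
set w := Num.max (L - e / 2) ((l + L) / 2).
have lw : l < w by rewrite lt_max; apply/orP; right; lra.
have wL : w < L by rewrite gt_max; apply/andP; split; lra.
have w_ge : L - e / 2 <= w by rewrite le_max lexx.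
have w0 : 0 < w by lra.
have [C C0 lowC] := low w lw wL.
near=> N.
have N0 : (0 < N)%N by near: N; exact: nbhs_infty_gt.
have NR : (0 : R) < N%:R by rewrite ltr0n.
have rN : - (2 * w * ln C) / e <= N%:R by near: N; exact: nbhs_infty_ger.
rewrite ger0_norm ?subr_ge0; last by near: N.
have root_ge : C `^ N%:R^-1 * w <= u N `^ N%:R^-1.
  rewrite -[X in _ * X](exprn_powRV (ltW w0) N0) -powRM ?exprn_ge0 ?(ltW C0) ?(ltW w0) //.
  have low_N : C * w ^+ N <= u N by near: N.
  have Cw0 : 0 <= C * w ^+ N by rewrite mulr_ge0 ?exprn_ge0 ?ltW.
  have r0 : (0 : R) <= N%:R^-1 by rewrite invr_ge0 ler0n.
  by apply: (ge0_ler_powR r0); rewrite ?nnegrE // (le_trans Cw0).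
have C_root : 1 + N%:R^-1 * ln C <= C `^ N%:R^-1 := powR_ge1Dln _ C0.
have lnC_small : - (e / 2) <= N%:R^-1 * ln C * w.
  have NK : N%:R * (N%:R^-1 * ln C * w) = ln C * w.
    by rewrite !mulrA mulfV ?gt_eqF // mul1r.
  rewrite -(ler_pM2l NR) NK; move: rN; rewrite ler_pdivrMr //; nra.
have : (1 + N%:R^-1 * ln C) * w <= C `^ N%:R^-1 * w by rewrite ler_pM2r.
by lra.
Unshelve. all: by end_near.
Qed.


Lemma trunc_gf_ge1 k cap (z : R) : (0 < k)%N -> 0 <= z < 1 -> 1 < blocks_gf k cap z ->
  \forall N \near \oo, 1 <= trunc_gf k cap N z.
Proof.
move=> k_gt0 /andP[z0 z1] gf_gt1.
have kR : (0 : R) < k%:R by rewrite ltr0n.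
have d0 : 0 < (blocks_gf k cap z - 1) * (1 - z) / k%:R.
  by rewrite !mulr_gt0 ?invr_gt0 ?subr_gt0.
have [M _ capM] : \forall N \near \oo, forall a, (a < k)%N -> (cap a <= N)%N.
  exists (\sum_(a <- iota 0 k) cap a)%N => // N /= capN a ak.
  apply: leq_trans capN; rewrite (bigD1_seq a) ?iota_uniq ?mem_iota //=.
  exact: leq_addr.
near=> N; apply: le_trans (trunc_gf_ge (cap := cap) (N := N) _ _); last first.
- by move=> a ak; apply: capM => //; near: N; exact: nbhs_infty_ge.
- by rewrite z0.
have small : z ^+ N.+1 <= (blocks_gf k cap z - 1) * (1 - z) / k%:R.
  apply: le_trans (_ : z ^+ N <= _); first by rewrite exprS ler_piMl ?exprn_ge0 // ltW.
  by near: N; apply: exprn_le_eventually; rewrite ?z0.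
have tail : k%:R * (z ^+ N.+1 / (1 - z)) <= blocks_gf k cap z - 1.
  by rewrite mulrA ler_pdivrMr ?subr_gt0 // [k%:R * _]mulrC -ler_pdivlMr.
lra.
Unshelve. all: by end_near.
Qed.

Lemma Pcard_root_le k cap (y : R) N : 0 < y < 1 -> blocks_gf k cap y <= 1 -> (0 < N)%N ->
  (Pcard (block_property k cap) N)%:R `^ N%:R^-1 <= y^-1.
Proof.
move=> /andP[y0 y1] gf_le1 N_gt0.
have ncodes_le : (ncodes k cap N)%:R <= y^-1 ^+ N.
  have := ncodes_pow_le y0 (fun N => le_trans (trunc_gf_le _ _ _ _) gf_le1) N.
  by rewrite exprVn -div1r ler_pdivlMr ?exprn_gt0 //; apply; rewrite ltW.
have Pcard_le : (Pcard (block_property k cap) N)%:R <= y^-1 ^+ N.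
  by apply: le_trans ncodes_le; rewrite ler_nat Pcard_le_ncodes.
have yV0 : 0 <= y^-1 by rewrite invr_ge0 ltW.
have r0 : (0 : R) <= N%:R^-1 by rewrite invr_ge0 ler0n.
rewrite -[leRHS](exprn_powRV yV0 N_gt0).
by apply: (ge0_ler_powR r0); rewrite ?nnegrE ?ler0n ?exprn_ge0.
Qed.

Lemma Pcard_ge_geometric k cap (z : R) : (0 < k)%N -> 0 < z < 1 ->
  1 < blocks_gf k cap z -> exists2 C, 0 < C &
  forall N, (k <= N)%N -> C * z^-1 ^+ N <= (Pcard (block_property k cap) N)%:R.
Proof.
move=> k_gt0 /andP[z0 z1] gf_gt1.
have z01 : 0 <= z < 1 by rewrite (ltW z0) z1.
have [M _ gf_ge1] := trunc_gf_ge1 k_gt0 z01 gf_gt1.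
exists (z ^+ (M + k)); first exact: exprn_gt0.
move=> N kN; have low := ncodes_pow_ge k_gt0 (ltac:(by rewrite z0 ltW) : 0 < z <= 1) gf_ge1 (N - k).
apply: le_trans (_ : (ncodes k cap (N - k))%:R <= _); last first.
  by rewrite ler_nat; have := ncodes_le_Pcard k cap (N - k); rewrite subnKC.
rewrite -(ler_pM2r (exprn_gt0 (N - k) z0)); apply: le_trans low.
have zk : z ^+ k != 0 by rewrite expf_neq0 // gt_eqF.
have zNk : z ^+ (N - k) != 0 by rewrite expf_neq0 // gt_eqF.
rewrite exprD exprVn -(subnKC kN) exprD addKn.
by rewrite invfM !mulrA mulfK // divfK.
Qed.

Lemma growth_constant_of_root k cap (y : R) : (0 < k)%N -> 0 < y < 1 ->
  blocks_gf k cap y = 1 -> @growth_constants R y^-1.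
Proof.
move=> k_gt0 y01 gf_y; have /andP[y0 y1] := y01.
exists (block_property k cap); split; first exact: block_property_hereditary.
apply: (@root_cvg _ 1) => //; first by rewrite invf_gt1.
  near=> N; apply: Pcard_root_le; rewrite ?gf_y //.
  by near: N; exact: nbhs_infty_gt.
move=> w w_gt1 w_lt; have w0 : 0 < w by apply: lt_trans w_gt1.
have z01 : 0 < w^-1 < 1 by rewrite invr_gt0 w0 invf_lt1.
have gf_gt1 : 1 < blocks_gf k cap w^-1.
  rewrite -gf_y; apply: blocks_gf_lt; rewrite ?invf_lt1 ?ltW //.
  by rewrite -[y]invrK ltf_pV2 ?posrE ?invr_gt0.
have [C C0 lowC] := Pcard_ge_geometric k_gt0 z01 gf_gt1.
exists C => //; near=> N; rewrite -[w]invrK; apply: lowC.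
by near: N; exact: nbhs_infty_ge.
Unshelve. all: by end_near.
Qed.

Definition set_cap (cap : nat -> nat) j m a := if a == j then m else cap a.

Lemma blocks_gf_set_cap k cap j m (y : R) : (j < k)%N -> cap j = 0%N -> (0 < m)%N ->
  y != 1 -> blocks_gf k (set_cap cap j m) y = blocks_gf k cap y - y ^+ m.+1 / (1 - y).
Proof.
move=> jk cj m_gt0 y1; have ji : j \in iota 0 k by rewrite mem_iota.
rewrite /blocks_gf !(bigD1_seq j ji (iota_uniq 0 k)) /=.
rewrite (eq_bigr (fun a => colour_gf cap a y)); last first.
  by move=> a aj; rewrite /colour_gf /set_cap (negbTE aj).
rewrite /colour_gf /set_cap eqxx cj eqxx (negbTE (lt0n_neq0 m_gt0)) geoE //.
have : 1 - y != 0 by rewrite subr_eq0 eq_sym.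
by move=> ?; field.
Qed.

(* Capping the uncapped colour [j] at a large length [m] lowers the generating
   function by the tail [y^(m+1) / (1 - y)], so the root moves up slightly. *)
Lemma capped_root k cap j (y z : R) : (j < k)%N -> cap j = 0%N ->
  0 < y -> y < z -> z < 1 -> blocks_gf k cap y = 1 ->
  exists m y', [/\ y < y', y' <= z & blocks_gf k (set_cap cap j m) y' = 1].
Proof.
move=> jk cj y0 yz z1 gf_y; have z0 : 0 < z by apply: lt_trans yz.
have gf_z : 1 < blocks_gf k cap z.
  by rewrite -gf_y; apply: blocks_gf_lt; rewrite ?ltW //; lia.
have d0 : 0 < (blocks_gf k cap z - 1) * (1 - z) by rewrite mulr_gt0 ?subr_gt0.
have [m _ small] := exprn_le_eventually (ltac:(by rewrite (ltW z0) z1) : 0 <= z < 1) d0.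
pose f := @blocks_gf R k (set_cap cap j m.+1).
have fE (x : R) : x < 1 -> f x = blocks_gf k cap x - x ^+ m.+2 / (1 - x).
  by move=> x1; rewrite /f blocks_gf_set_cap // lt_eqF.
have fy : f y < 1.
  by rewrite fE ?(lt_trans yz) // gf_y gtrBl divr_gt0 ?exprn_gt0 ?subr_gt0 ?(lt_trans yz).
have fz : 1 <= f z.
  have tail : z ^+ m.+2 / (1 - z) <= blocks_gf k cap z - 1.
    by rewrite ler_pdivrMr ?subr_gt0 //; apply: small => /=; lia.
  by rewrite fE //; lra.
have f_cont : {within `[y, z], continuous f}.
  apply: continuous_in_subspaceT => x; rewrite inE /= in_itv /= => /andP[_ xz].
  by apply: blocks_gf_continuous; rewrite lt_eqF // (le_lt_trans xz).
have f_range : Num.min (f y) (f z) <= 1 <= Num.max (f y) (f z).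
  by rewrite ge_min (ltW fy) le_max fz orbT.
have [y' y'_in fy'] := IVT (ltW yz) f_cont f_range.
move: y'_in; rewrite in_itv /= => /andP[yy' y'z].
exists m.+1, y'; split => //; rewrite lt_neqAle yy' andbT.
by apply: contraTneq fy => ->; rewrite fy' ltxx.
Qed.

Lemma exists_inv_close (y e : R) : 0 < y < 1 -> 0 < e ->
  exists2 z, y < z < 1 & y^-1 - e < z^-1.
Proof.
move=> /andP[y0 y1] e0; have yV : 1 < y^-1 by rewrite invf_gt1.
set w := Num.max (y^-1 - e / 2) ((1 + y^-1) / 2).
have w_gt1 : 1 < w by rewrite lt_max; apply/orP; right; lra.
have w_lt : w < y^-1 by rewrite gt_max; apply/andP; split; lra.
have w0 : 0 < w by lra.
exists w^-1; last by rewrite invrK lt_max; apply/orP; left; lra.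
by rewrite invf_lt1 // w_gt1 andbT -[y]invrK ltf_pV2 ?posrE ?invr_gt0.
Qed.

Lemma acc_below_iter_root k d cap (y : R) : (0 < k)%N -> (d <= k)%N ->
  (forall a, (k - d <= a)%N -> cap a = 0%N) -> 0 < y < 1 -> blocks_gf k cap y = 1 ->
  acc_below_iter d (@growth_constants R) y^-1.
Proof.
move=> k_gt0; elim: d cap y => [|d IH] cap y dk uncapped y01 gf_y.
  exact: growth_constant_of_root k_gt0 y01 gf_y.
move=> e e0; have /andP[y0 y1] := y01.
have [z /andP[yz z1] zV] := exists_inv_close y01 e0.
have jk : (k - d.+1 < k)%N by lia.
have [m [y' [yy' y'z gf_y']]] := capped_root jk (uncapped _ (leqnn _)) y0 yz z1 gf_y.
have y'0 : 0 < y' by apply: lt_trans yy'.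
exists y'^-1; split.
  apply: IH gf_y'; [lia | | by rewrite y'0 (le_lt_trans y'z)].
  by move=> a da; rewrite /set_cap; case: eqP => [|_]; [lia | apply: uncapped; lia].
have z0 : 0 < z by apply: lt_le_trans y'z.
split; last by rewrite ltf_pV2 ?posrE.
by apply: lt_le_trans zV _; rewrite lef_pV2 ?posrE.
Qed.

End Growth.

Theorem corollary32 (R : realType) (n : nat) :
  (2 <= n)%N -> acc_below_iter n.-1 (@growth_constants R) (n%:R : R).
Proof.
move=> n2; set k := n.-1.
have k_gt0 : (0 < k)%N by rewrite /k; lia.
have nE : (n%:R : R) = k%:R + 1 by rewrite /k natr1 prednK //; lia.
have kR : (1 : R) <= k%:R by rewrite ler1n.
have y01 : 0 < (n%:R^-1 : R) < 1 by rewrite invr_gt0 invf_lt1 nE; lra.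
have gf_y : blocks_gf k (fun=> 0%N) (n%:R^-1 : R) = 1.
  rewrite /blocks_gf /colour_gf /= sum_iota_const nE.
  have k1 : (k%:R + 1 : R) != 0 by rewrite gt_eqF //; lra.
  have k0 : (k%:R : R) != 0 by rewrite gt_eqF //; lra.
  by field; rewrite k1 addrK k0.
by rewrite -[n%:R]invrK; apply: acc_below_iter_root k_gt0 (leqnn k) _ y01 gf_y.
Qed.
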